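(* For all $u\in R(F,H)$ and $x\in R(E)$, \[ x\bullet u^\eta=[x,u]^\eta, \] where $[x,u]=xu-ux$.
   Context: Let $f\in\mathbb{C}[H]$ be a polynomial. $R=R(f)$ is the associative $\mathbb{C}$-algebra generated by $E,F,H$ with relations $EF-FE=f(H)$, $HE-EH=E$, $HF-FH=-F$; the monomials $F^iH^jE^k$ form a basis of $R$. Let $R(E)=\mathbb{C}[E]$ and $R(F,H)$ the subalgebra generated by $F,H$. Fix an algebra homomorphism $\eta:R(E)\to\mathbb{C}$ with $\eta(E)\neq0$ and let $R_\eta(E)=\ker\eta$. Then $R=R(F,H)\oplus R\,R_\eta(E)$ as vector spaces; for $u\in R$, $u^\eta$ denotes its $R(F,H)$-component. The $\eta$-reduced action of $R(E)$ on $R(F,H)$ is $x\bullet v=(xv)^\eta-\eta(x)v$ for $x\in R(E)$, $v\in R(F,H)$. *)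

From Stdlib Require Import ClassicalEpsilon.
From mathcomp Require Import all_boot all_algebra.
From mathcomp Require Import complex Rstruct.
Set Implicit Arguments.
Unset Strict Implicit.
Unset Printing Implicit Defensive.
Import GRing.Theory.
Local Open Scope ring_scope.

Definition CC : fieldType := (Rdefinitions.R)[i].

Section Defs.
Variable A : algType CC.

Inductive subalg_gen (S : A -> Prop) : A -> Prop :=
  | sg_gen a : S a -> subalg_gen S a
  | sg_one : subalg_gen S 1
  | sg_add a b : subalg_gen S a -> subalg_gen S b -> subalg_gen S (a + b)
  | sg_scale (c : CC) a : subalg_gen S a -> subalg_gen S (c *: a)
  | sg_mul a b : subalg_gen S a -> subalg_gen S b -> subalg_gen S (a * b).

Inductive left_ideal_gen (I : A -> Prop) : A -> Prop :=
  | lig_zero : left_ideal_gen I 0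
  | lig_mul r y : I y -> left_ideal_gen I (r * y)
  | lig_add a b : left_ideal_gen I a -> left_ideal_gen I b -> left_ideal_gen I (a + b).

Variables E F H : A.

Definition R_relations (f : {poly CC}) : Prop :=
  [/\ E * F - F * E = horner_alg H f,
      H * E - E * H = E &
      H * F - F * H = - F].

Definition monom (i j k : nat) : A := F ^+ i * H ^+ j * E ^+ k.

Definition PBW_basis : Prop :=
  (forall a : A, exists (N : nat) (c : nat -> nat -> nat -> CC),
      a = \sum_(i < N) \sum_(j < N) \sum_(k < N) c i j k *: monom i j k)
  /\
  (forall (N : nat) (c : nat -> nat -> nat -> CC),
      \sum_(i < N) \sum_(j < N) \sum_(k < N) c i j k *: monom i j k = 0 ->
      forall i j k, (i < N)%N -> (j < N)%N -> (k < N)%N -> c i j k = 0).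

Definition RE : A -> Prop := subalg_gen (fun a => a = E).
Definition RFH : A -> Prop := subalg_gen (fun a => a = F \/ a = H).

(* eta : R(E) -> C is an algebra homomorphism (values outside R(E) irrelevant) *)
Definition alg_hom_on_RE (eta : A -> CC) : Prop :=
  [/\ eta 1 = 1,
      forall a b, RE a -> RE b -> eta (a + b) = eta a + eta b,
      forall (c : CC) a, RE a -> eta (c *: a) = c * eta a &
      forall a b, RE a -> RE b -> eta (a * b) = eta a * eta b].

Variable eta : A -> CC.

Definition RetaE (a : A) : Prop := RE a /\ eta a = 0.

(* u^eta : the R(F,H)-component of u in  R = R(F,H) (+) R R_eta(E) *)
Definition eta_part (u : A) : A :=
  epsilon (inhabits 0) (fun v => RFH v /\ left_ideal_gen RetaE (u - v)).

Definition eta_action (x v : A) : A := eta_part (x * v) - eta x *: v.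

End Defs.

From Stdlib Require Import ClassicalEpsilon.
From mathcomp Require Import all_boot all_algebra.
From mathcomp Require Import complex Rstruct zify.
Set Implicit Arguments. Unset Strict Implicit. Unset Printing Implicit Defensive.
Import GRing.Theory.
Local Open Scope ring_scope.

(* Let y = E - eta(E). Every x in R(E) satisfies x - eta(x) in R(E) y, so the left
   ideal R R_eta(E) is contained in R y, and F^i H^j E^k is congruent to
   eta(E^k) F^i H^j modulo it; hence every u is congruent to some v in R(F,H).
   Such a v is unique: R(F,H) is spanned by the F^i H^j (because H F^i = F^i (H - i)),
   and comparing PBW coefficients in v = a y shows that the coefficients of a satisfy
   c_ijk = eta(E) c_ij(k+1), so they vanish.  The theorem follows because
     xu - ux - ((x u^eta)^eta - eta(x) u^eta)
       = x (u - u^eta) + (x u^eta - (x u^eta)^eta) - u (x - eta(x)) - eta(x) (u - u^eta)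
   lies in R R_eta(E). *)

Section Generated.
Variable A : algType CC.

Lemma subalg_genX (S : A -> Prop) a n : subalg_gen S a -> subalg_gen S (a ^+ n).
Proof.
by move=> Sa; elim: n => [|n IHn]; [exact: sg_one | rewrite exprS; exact: sg_mul].
Qed.

Lemma subalg_genB (S : A -> Prop) a b :
  subalg_gen S a -> subalg_gen S b -> subalg_gen S (a - b).
Proof. by move=> Sa Sb; rewrite -scaleN1r; apply: sg_add => //; exact: sg_scale. Qed.

Variable S : A -> Prop.

Lemma left_ideal_genMl r a : left_ideal_gen S a -> left_ideal_gen S (r * a).
Proof.
elim=> [| r' y Sy | a1 a2 _ IH1 _ IH2].
- by rewrite mulr0; exact: lig_zero.
- by rewrite mulrA; exact: lig_mul.
- by rewrite mulrDr; exact: lig_add.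
Qed.

Lemma left_ideal_genZ c a : left_ideal_gen S a -> left_ideal_gen S (c *: a).
Proof. by move=> Sa; rewrite -[a]mul1r scalerAl; exact: left_ideal_genMl. Qed.

Lemma left_ideal_genB a b :
  left_ideal_gen S a -> left_ideal_gen S b -> left_ideal_gen S (a - b).
Proof. by move=> Sa Sb; rewrite -scaleN1r; apply: lig_add => //; exact: left_ideal_genZ. Qed.

End Generated.

Section AugmentationIdeal.
Variables (A : algType CC) (E : A) (eta : A -> CC).
Hypothesis eta_hom : alg_hom_on_RE E eta.

Lemma RE_sub_eta x : RE E x -> RetaE E eta (x - eta x *: 1).
Proof.
case: eta_hom => eta1 etaD etaZ _ REx.
have RE1 : RE E 1 by exact: sg_one.
have REx1 : RE E ((- eta x) *: 1) by exact: sg_scale.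
rewrite -scaleNr; split; first exact: sg_add.
by rewrite etaD // etaZ // eta1 mulr1 addrN.
Qed.

Lemma RE_sub_eta_mul x : RE E x -> exists q, x - eta x *: 1 = q * (E - eta E *: 1).
Proof.
case: eta_hom => eta1 etaD etaZ etaM.
elim=> [a -> | | a b REa [qa IHa] REb [qb IHb] | c a REa [qa IHa]
       | a b REa [qa IHa] REb [qb IHb]].
- by exists 1; rewrite mul1r.
- by exists 0; rewrite mul0r eta1 scale1r subrr.
- by exists (qa + qb); rewrite etaD // mulrDl -IHa -IHb scalerDl opprD addrACA.
- by exists (c *: qa); rewrite etaZ // -scalerAl -IHa scalerBr scalerA.
- exists (a * qb + eta b *: qa).
  (* a b - eta a eta b = a (b - eta b) + eta b (a - eta a) *)
  rewrite etaM // mulrDl -mulrA -IHb -scalerAl -IHa mulrBr scalerBr -scalerAr mulr1.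
  by rewrite scalerA mulrC addrA subrK.
Qed.

Lemma left_ideal_RetaE_mul a :
  left_ideal_gen (RetaE E eta) a -> exists r, a = r * (E - eta E *: 1).
Proof.
elim=> [| r y [REy etay0] | a1 a2 _ [r1 ->] _ [r2 ->]].
- by exists 0; rewrite mul0r.
- have [q yq] := RE_sub_eta_mul REy.
  by exists (r * q); rewrite -mulrA -yq etay0 scale0r subr0.
- by exists (r1 + r2); rewrite mulrDl.
Qed.

End AugmentationIdeal.

Section FHSpan.
Variables (A : algType CC) (F H : A).

Inductive FH_span : A -> Prop :=
  | FH_span0 : FH_span 0
  | FH_span_monom (c : CC) i j : FH_span (c *: (F ^+ i * H ^+ j))
  | FH_spanD a b : FH_span a -> FH_span b -> FH_span (a + b).

Lemma FH_spanZ c a : FH_span a -> FH_span (c *: a).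
Proof.
elim=> [| c' i j | a1 a2 _ IH1 _ IH2].
- by rewrite scaler0; exact: FH_span0.
- by rewrite scalerA; exact: FH_span_monom.
- by rewrite scalerDr; exact: FH_spanD.
Qed.

Hypothesis HF_rel : H * F - F * H = - F.

Lemma mulH_Fexp i : H * F ^+ i = F ^+ i * (H - i%:R *: 1).
Proof.
elim: i => [|i IHi]; first by rewrite expr0 mul1r mulr1 scale0r subr0.
have HF : H * F = F * (H - 1).
  by rewrite mulrBr mulr1 -HF_rel addrCA subrr addr0.
rewrite exprSr mulrA IHi -mulrA mulrBl -scalerAl mul1r HF.
rewrite -mulrA !mulrBr mulr1 mulr_algr -natr1 scalerDl scale1r.
by rewrite mulrDr opprD addrA addrAC.
Qed.

Lemma FH_span_mulF s : FH_span s -> FH_span (F * s).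
Proof.
elim=> [| c i j | a1 a2 _ IH1 _ IH2].
- by rewrite mulr0; exact: FH_span0.
- by rewrite -scalerAr mulrA -exprS; exact: FH_span_monom.
- by rewrite mulrDr; exact: FH_spanD.
Qed.

Lemma FH_span_mulH s : FH_span s -> FH_span (H * s).
Proof.
elim=> [| c i j | a1 a2 _ IH1 _ IH2].
- by rewrite mulr0; exact: FH_span0.
- have -> : H * (c *: (F ^+ i * H ^+ j))
            = c *: (F ^+ i * H ^+ j.+1) + (- c * i%:R) *: (F ^+ i * H ^+ j).
    rewrite -scalerAr mulrA mulH_Fexp -mulrA mulrBl -scalerAl mul1r -exprS.
    by rewrite mulrBr -scalerAr scalerBr scalerA mulNr scaleNr.
  by apply: FH_spanD; exact: FH_span_monom.
- by rewrite mulrDr; exact: FH_spanD.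
Qed.

Lemma RFH_FH_span v : RFH F H v -> FH_span v.
Proof.
move=> RFH_v.
suff RFH_mul : forall s, FH_span s -> FH_span (v * s).
  rewrite -[v]mulr1; apply: RFH_mul.
  by have := FH_span_monom 1 0 0; rewrite scale1r !expr0 mulr1.
elim: RFH_v => [a [->|->] | | a b _ IHa _ IHb | c a _ IHa | a b _ IHa _ IHb] s Ss.
- exact: FH_span_mulF.
- exact: FH_span_mulH.
- by rewrite mul1r.
- by rewrite mulrDl; apply: FH_spanD; [exact: IHa | exact: IHb].
- by rewrite -scalerAl; apply: FH_spanZ; exact: IHa.
- by rewrite -mulrA; apply: IHa; exact: IHb.
Qed.

End FHSpan.

Lemma sum_ord_widen0 (V : nmodType) N M (leNM : (N <= M)%N) (g : 'I_M -> V) :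
  (forall i : 'I_M, (N <= i)%N -> g i = 0) ->
  \sum_(i < M) g i = \sum_(i < N) g (widen_ord leNM i).
Proof.
move=> g0; rewrite -big_ord_narrow [RHS]big_mkcond /=.
by apply: eq_bigr => i _; case: ltnP => // /g0.
Qed.

Lemma sum_ord_single (V : nmodType) N i (ltiN : (i < N)%N) (g : 'I_N -> V) :
  (forall i' : 'I_N, nat_of_ord i' != i -> g i' = 0) ->
  \sum_(i' < N) g i' = g (Ordinal ltiN).
Proof. by move=> g0; rewrite (bigD1 (Ordinal ltiN)) //= big1 ?addr0. Qed.

Section PBWSums.
Variables (A : algType CC) (E F H : A).

Definition pbw_sum N (c : nat -> nat -> nat -> CC) : A :=
  \sum_(i < N) \sum_(j < N) \sum_(k < N) c i j k *: monom E F H i j k.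

Definition pbw_supp N (c : nat -> nat -> nat -> CC) : Prop :=
  forall i j k, [|| N <= i, N <= j | N <= k]%N -> c i j k = 0.

Lemma pbw_supp_widen N M c : pbw_supp N c -> (N <= M)%N -> pbw_supp M c.
Proof. by move=> c0 leNM i j k out; apply: c0; lia. Qed.

Lemma pbw_sum_widen N M c : pbw_supp N c -> (N <= M)%N -> pbw_sum M c = pbw_sum N c.
Proof.
move=> c0 leNM; rewrite /pbw_sum (sum_ord_widen0 leNM) => [|i le_Ni]; last first.
  by apply: big1 => j _; apply: big1 => k _; rewrite c0 ?scale0r ?le_Ni.
apply: eq_bigr => i _; rewrite (sum_ord_widen0 leNM) => [|j le_Nj]; last first.
  by apply: big1 => k _; rewrite c0 ?scale0r ?le_Nj ?orbT.
apply: eq_bigr => j _; apply: sum_ord_widen0 => // k le_Nk.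
by rewrite c0 ?scale0r ?le_Nk ?orbT.
Qed.

Lemma pbw_sum_lin N a c d :
  pbw_sum N (fun i j k => a * c i j k + d i j k) = a *: pbw_sum N c + pbw_sum N d.
Proof.
rewrite /pbw_sum scaler_sumr -big_split; apply: eq_bigr => i _.
rewrite scaler_sumr -big_split; apply: eq_bigr => j _.
by rewrite scaler_sumr -big_split; apply: eq_bigr => k _; rewrite scalerDl scalerA.
Qed.

Definition shiftE (c : nat -> nat -> nat -> CC) i j k : CC :=
  if k is k'.+1 then c i j k' else 0.

Lemma pbw_sum_mulE N c : pbw_supp N c -> pbw_sum N c * E = pbw_sum N.+1 (shiftE c).
Proof.
move=> c0; rewrite /pbw_sum mulr_suml (sum_ord_widen0 (leqnSn N)) => [|i le_Ni]; last first.
  by apply: big1 => j _; apply: big1 => -[[|k] ?] _; rewrite /= ?c0 ?scale0r ?le_Ni.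
apply: eq_bigr => i _; rewrite mulr_suml (sum_ord_widen0 (leqnSn N)) => [|j le_Nj]; last first.
  by apply: big1 => -[[|k] ?] _; rewrite /= ?c0 ?scale0r ?le_Nj ?orbT.
apply: eq_bigr => j _; rewrite big_ord_recl /= scale0r add0r mulr_suml.
by apply: eq_bigr => k _; rewrite -scalerAl /monom /bump add0n exprSr mulrA.
Qed.

Lemma pbw_sum_monom c i j :
  pbw_sum (maxn i j).+1 (fun i' j' k' => if [&& i' == i, j' == j & k' == 0%N] then c else 0)
  = c *: monom E F H i j 0.
Proof.
have lt_i : (i < (maxn i j).+1)%N by rewrite ltnS leq_maxl.
have lt_j : (j < (maxn i j).+1)%N by rewrite ltnS leq_maxr.
rewrite /pbw_sum (sum_ord_single lt_i) => [|i' /negbTE ne_i']; last first.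
  by apply: big1 => j' _; apply: big1 => k _; rewrite ne_i' scale0r.
rewrite (sum_ord_single lt_j) => [|j' /negbTE ne_j']; last first.
  by apply: big1 => k _; rewrite ne_j' andbF scale0r.
rewrite (sum_ord_single (ltn0Sn _)) => [|k /negbTE ne_k]; last first.
  by rewrite ne_k !andbF scale0r.
by rewrite /= !eqxx.
Qed.

Lemma pbw_supp_shiftE N c : pbw_supp N c -> pbw_supp N.+1 (shiftE c).
Proof. by move=> c0 i j [|k] out //=; apply: c0; lia. Qed.

Lemma FH_span_pbw_sum v : FH_span F H v ->
  exists N d, [/\ pbw_supp N d, forall i j k, k != 0%N -> d i j k = 0 & v = pbw_sum N d].
Proof.
elim=> [| c i j | a b _ [Na [da [da0 da_k ->]]] _ [Nb [db [db0 db_k ->]]]].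
- by exists 0%N, (fun _ _ _ => 0); split => //; rewrite /pbw_sum big_ord0.
- exists (maxn i j).+1, (fun i' j' k' => if [&& i' == i, j' == j & k' == 0%N] then c else 0).
  split; last by rewrite pbw_sum_monom /monom expr0 mulr1.
    by move=> i' j' k' out; case: and3P => // -[/eqP eq_i /eqP eq_j /eqP eq_k]; lia.
  by move=> i' j' k' /negbTE ->; rewrite !andbF.
- exists (maxn Na Nb), (fun i j k => 1 * da i j k + db i j k); split.
  + by move=> i j k out; rewrite da0 ?db0 ?mulr0 ?addr0 //; lia.
  + by move=> i j k nz_k; rewrite da_k ?db_k ?mulr0 ?addr0.
  + rewrite pbw_sum_lin scale1r (pbw_sum_widen da0) ?leq_maxl //.
    by rewrite (pbw_sum_widen db0) ?leq_maxr.
Qed.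

Hypothesis pbw : PBW_basis E F H.

Lemma pbw_sum_exists a : exists N c, pbw_supp N c /\ a = pbw_sum N c.
Proof.
have [N [c ->]] := pbw.1 a.
exists N, (fun i j k => if [&& i < N, j < N & k < N]%N then c i j k else 0); split.
  by move=> i j k out; case: and3P => // -[lt_i lt_j lt_k]; lia.
by apply: eq_bigr => i _; apply: eq_bigr => j _; apply: eq_bigr => k _; rewrite !ltn_ord.
Qed.

Lemma pbw_sum_inj N c d : pbw_supp N c -> pbw_supp N d ->
  pbw_sum N c = pbw_sum N d -> forall i j k, c i j k = d i j k.
Proof.
move=> c0 d0 eq_cd i j k.
have [/and3P [lt_i lt_j lt_k] | out] := boolP [&& i < N, j < N & k < N]%N; last first.
  by rewrite c0 ?d0 //; lia.
have eq0 : pbw_sum N (fun i j k => -1 * d i j k + c i j k) = 0.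
  by rewrite pbw_sum_lin eq_cd scaleN1r addNr.
apply/eqP; rewrite -subr_eq0 -mulN1r addrC; apply/eqP.
exact: pbw.2 N _ eq0 i j k lt_i lt_j lt_k.
Qed.

Lemma FH_span_mul_Esub_eq0 (e : CC) v a : FH_span F H v -> v = a * (E - e *: 1) -> v = 0.
Proof.
move=> /FH_span_pbw_sum [N [d [d0 d_k ->]]]; have [M [c [c0 ->]]] := pbw_sum_exists a.
set K := maxn N M.+1 => eq_dc.
have le_NK : (N <= K)%N by rewrite leq_maxl.
have le_MK : (M.+1 <= K)%N by rewrite leq_maxr.
have eq_coef : forall i j k, d i j k = - e * c i j k + shiftE c i j k.
  have cK : pbw_supp K c := pbw_supp_widen c0 (ltnW le_MK).
  have sK : pbw_supp K (shiftE c) := pbw_supp_widen (pbw_supp_shiftE c0) le_MK.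
  apply: (@pbw_sum_inj K); first exact: pbw_supp_widen d0 le_NK.
    by move=> i j k out; rewrite cK ?sK // mulr0 addr0.
  rewrite pbw_sum_lin (pbw_sum_widen d0) // (pbw_sum_widen c0) ?(ltnW le_MK) //.
  rewrite (pbw_sum_widen (pbw_supp_shiftE c0)) // -pbw_sum_mulE // eq_dc.
  by rewrite mulrBr mulr_algr scaleNr addrC.
(* coefficients of E^(k+1): c_ijk = e c_ij(k+1), so c vanishes by downward induction on k *)
have c_rec i j k : c i j k = e * c i j k.+1.
  by apply/eqP; rewrite -subr_eq0 -mulNr addrC -(d_k i j k.+1) // eq_coef.
have c_eq0 n i j k : (M <= k + n)%N -> c i j k = 0.
  elim: n k => [|n IHn] k le_M; first by apply: c0; lia.
  by rewrite c_rec IHn ?mulr0 //; lia.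
rewrite eq_dc /pbw_sum big1 ?mul0r // => i _; apply: big1 => j _; apply: big1 => k _.
by rewrite (c_eq0 M) ?scale0r ?leq_addl.
Qed.

End PBWSums.

Section EtaPart.
Variables (A : algType CC) (E F H : A) (eta : A -> CC).
Hypotheses (eta_hom : alg_hom_on_RE E eta) (pbw : PBW_basis E F H).

Lemma eta_part_exists u : exists v, RFH F H v /\ left_ideal_gen (RetaE E eta) (u - v).
Proof.
pose P a := exists v, RFH F H v /\ left_ideal_gen (RetaE E eta) (a - v).
have P0 : P 0.
  exists 0; split; last by rewrite subr0; exact: lig_zero.
  by rewrite -(scale0r (1 : A)); exact/sg_scale/sg_one.
have PD a b : P a -> P b -> P (a + b).
  move=> [va [RFHa Ia]] [vb [RFHb Ib]]; exists (va + vb); split; first exact: sg_add.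
  by rewrite opprD addrACA; exact: lig_add.
suff : P u by [].
have [N [c ->]] := pbw.1 u.
apply: big_ind => // i _; apply: big_ind => // j _; apply: big_ind => // k _.
exists ((c i j k * eta (E ^+ k)) *: (F ^+ i * H ^+ j)); split.
  by apply/sg_scale/sg_mul; apply/subalg_genX/sg_gen; [left | right].
rewrite -scalerA -scalerBr; apply: left_ideal_genZ.
rewrite /monom -mulr_algr -mulrBr; apply: lig_mul; apply: RE_sub_eta => //.
exact/subalg_genX/sg_gen.
Qed.

Lemma eta_partP u :
  RFH F H (eta_part E F H eta u) /\ left_ideal_gen (RetaE E eta) (u - eta_part E F H eta u).
Proof. exact: epsilon_spec (eta_part_exists u). Qed.

Hypothesis HF_rel : H * F - F * H = - F.

Lemma eta_part_unique u v :
  RFH F H v -> left_ideal_gen (RetaE E eta) (u - v) -> eta_part E F H eta u = v.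
Proof.
move=> RFHv Iv; have [RFHw Iw] := eta_partP u; set w := eta_part E F H eta u in RFHw Iw *.
have [r eq_r] := left_ideal_RetaE_mul eta_hom (left_ideal_genB Iv Iw).
apply/eqP; rewrite -subr_eq0; apply/eqP.
have FH_wv := RFH_FH_span HF_rel (subalg_genB RFHw RFHv).
apply: (FH_span_mul_Esub_eq0 pbw (e := eta E) (a := r) FH_wv).
by rewrite -eq_r opprB [RHS]addrC subrKA.
Qed.

End EtaPart.

Theorem mainTheorem18 (A : algType CC) (f : {poly CC}) (E F H : A)
  (eta : A -> CC) :
  R_relations E F H f ->
  PBW_basis E F H ->
  alg_hom_on_RE E eta ->
  eta E != 0 ->
  forall u x : A, RFH F H u -> RE E x ->
    eta_action E F H eta x (eta_part E F H eta u)
    = eta_part E F H eta (x * u - u * x).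
Proof.
move=> [_ _ HF_rel] pbw eta_hom _ u x _ REx.
set v := eta_part E F H eta u; set w := eta_part E F H eta (x * v).
have [RFHv Iuv] := eta_partP eta_hom pbw u.
have [RFHw Ixvw] := eta_partP eta_hom pbw (x * v).
have Ixuv : left_ideal_gen (RetaE E eta) (x * u - x * v).
  by rewrite -mulrBr; exact: left_ideal_genMl.
have Iux : left_ideal_gen (RetaE E eta) (u * x - eta x *: u).
  by rewrite -mulr_algr -mulrBr; apply: lig_mul; exact: RE_sub_eta.
have Iuv_eta : left_ideal_gen (RetaE E eta) (eta x *: u - eta x *: v).
  by rewrite -scalerBr; exact: left_ideal_genZ.
symmetry; apply: eta_part_unique => //.
  by apply: subalg_genB => //; exact: sg_scale.
have -> : x * u - u * x - (w - eta x *: v)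
          = x * u - x * v + (x * v - w) - (u * x - eta x *: u + (eta x *: u - eta x *: v)).
  by rewrite !subrKA !opprB addrACA [RHS]addrACA [- (u * x) - w]addrC.
by apply: left_ideal_genB; apply: lig_add.
Qed.
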